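(* Let $m\ge2$ be an integer and let $A$ be a left brace with $A^{(3)}=A^{m+1}=\{0\}$. Let $a\in A$, and define $a_1=a$ and $a_{j+1}=a*a_j$ for $j\ge1$ (so $a_j=0$ for $j>m$). Then for every integer $n$ (possibly negative or zero) and every $1\le j\le m$, \[(na)*a_j=\sum_{k=1}^{m-j}\binom{n}{k}a_{k+j}.\]
   Context: A left brace $(A,+,\cdot)$ is a set $A$ with two binary operations such that $(A,+)$ is an abelian group, $(A,\cdot)$ is a group, and $a(b+c)=ab-a+ac$ for all $a,b,c\in A$. In a left brace, $a*b=-a+ab-b$. For subsets $L,M\subseteq A$, $L*M$ is the subgroup of $(A,+)$ generated by $\{l*m\mid l\in L,m\in M\}$. Set $A^{(1)}=A$, $A^{(r+1)}=A^{(r)}*A$, and $A^1=A$, $A^{r+1}=A*A^r$ for $r\ge1$. Here $na$ is the $n$-fold multiple of $a$ in $(A,+)$. Generalised binomial coefficients: for $n\in\mathbb{Z}$ and integer $k\ge0$, $\binom{n}{0}=1$ and $\binom{n}{k}=\frac{n(n-1)\cdots(n-k+1)}{k!}$ for $k>0$. *)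

From HB Require Import structures.
From mathcomp Require Import all_boot all_order all_algebra.
Set Implicit Arguments. Unset Strict Implicit. Unset Printing Implicit Defensive.
Import Order.TTheory GRing.Theory Num.Theory.
Local Open Scope ring_scope.

Definition is_left_brace (A : zmodType) (mul : A -> A -> A) : Prop :=
  [/\ (forall x y z, mul x (mul y z) = mul (mul x y) z),
      (exists e : A, (forall x, mul e x = x /\ mul x e = x) /\
                     (forall x, exists y, mul x y = e /\ mul y x = e)) &
      (forall a b c, mul a (b + c) = mul a b - a + mul a c)].

Definition bstar (A : zmodType) (mul : A -> A -> A) (a b : A) : A :=
  - a + mul a b - b.

Inductive addgen (A : zmodType) (S : A -> Prop) : A -> Prop :=
  | addgen0 : addgen S 0
  | addgen_in x : S x -> addgen S x
  | addgen_sub x y : addgen S x -> addgen S y -> addgen S (x - y).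

Definition bstar_set (A : zmodType) (mul : A -> A -> A) (L M : A -> Prop) : A -> Prop :=
  addgen (fun x => exists l m, L l /\ M m /\ x = bstar mul l m).

(* A^(r) : A^(1) = A, A^(r+1) = A^(r) * A  (index r.+1 stands for A^(r+1)) *)
Fixpoint right_series (A : zmodType) (mul : A -> A -> A) (r : nat) : A -> Prop :=
  match r with
  | 0 | 1 => fun _ => True
  | r'.+1 => bstar_set mul (right_series mul r') (fun _ => True)
  end.

(* A^r : A^1 = A, A^(r+1) = A * A^r *)
Fixpoint left_series (A : zmodType) (mul : A -> A -> A) (r : nat) : A -> Prop :=
  match r with
  | 0 | 1 => fun _ => True
  | r'.+1 => bstar_set mul (fun _ => True) (left_series mul r')
  end.

(* a_j for j >= 1: a_1 = a, a_(j+1) = a * a_j *)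
Definition aseq (A : zmodType) (mul : A -> A -> A) (a : A) (j : nat) : A :=
  iter j.-1 (bstar mul a) a.

(* generalised binomial coefficient n(n-1)...(n-k+1)/k! for n : int
   (the division is exact) *)
Definition binz (n : int) (k : nat) : int :=
  ((\prod_(i < k) (n - i%:Z)) %/ (k`!)%:Z)%Z.

From HB Require Import structures.
From mathcomp Require Import all_boot all_order all_algebra.
From mathcomp Require Import ring.
Set Implicit Arguments. Unset Strict Implicit. Unset Printing Implicit Defensive.
Import Order.TTheory GRing.Theory Num.Theory.
Local Open Scope ring_scope.

(* Writing lambda_a(b) = -a + ab, both sides f(n) of the identity (for fixed a
   and j) satisfy f(0) = 0 and f(n+1) = a_(j+1) + lambda_a(f(n)): for the left
   side because A^(3) = 0 makes x * c additive in x up to the correction term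
   x * (y * c); for the right side by Pascal's rule, the term of index m - j
   dropping out since a_(m+1) lies in A^(m+1) = 0.  As lambda_a is injective,
   the recurrence propagates equality in both directions from n = 0. *)

Lemma int_ind_shift (P : int -> Prop) :
  P 0 -> (forall n, P n <-> P (n + 1)) -> forall n, P n.
Proof.
move=> P0 PS; elim/int_rect => [//|n Pn|n PNn].
  by rewrite -addn1 PoszD; apply/(PS n).1.
by apply/(PS _).2; rewrite -addn1 PoszD opprD addrNK.
Qed.

Lemma eq_int_recurrence (A : zmodType) (phi : A -> A) (c : A) (f g : int -> A) :
  injective phi -> f 0 = g 0 ->
  (forall n, f (n + 1) = c + phi (f n)) -> (forall n, g (n + 1) = c + phi (g n)) ->
  forall n, f n = g n.
Proof.
move=> phi_inj fg0 fS gS; apply: int_ind_shift => // n.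
by rewrite fS gS; split => [->//|/addrI/phi_inj].
Qed.

Definition ffactz (n : int) (k : nat) : int := \prod_(i < k) (n - i%:Z).

Lemma ffactz0n k : ffactz 0 k.+1 = 0.
Proof. by rewrite /ffactz big_ord_recl subrr mul0r. Qed.

Lemma ffactzSS n k : ffactz (n + 1) k.+1 = ffactz n k.+1 + k.+1%:Z * ffactz n k.
Proof.
rewrite /ffactz big_ord_recl big_ord_recr /=.
have -> : \prod_(i < k) (n + 1 - (bump 0 i)%:Z) = \prod_(i < k) (n - i%:Z).
  by apply: eq_bigr => i _; rewrite /bump add1n -addn1 PoszD; ring.
ring.
Qed.

Lemma dvdz_fact_ffactz n k : (k`!%:Z %| ffactz n k)%Z.
Proof.
elim: k n => [|k IHk] n; first by rewrite fact0 dvdzE dvd1n.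
move: n; apply: int_ind_shift; first by rewrite ffactz0n dvdz0.
move=> n; rewrite ffactzSS rpredDr // factS PoszM.
exact: dvdz_mul (dvdzz _) (IHk n).
Qed.

Lemma binz0 n : binz n 0 = 1.
Proof. by rewrite /binz big_ord0 fact0 divz1. Qed.

Lemma binz0n k : binz 0 k.+1 = 0.
Proof. by rewrite /binz -/(ffactz 0 k.+1) ffactz0n div0z. Qed.

Lemma binzS n k : binz (n + 1) k.+1 = binz n k.+1 + binz n k.
Proof.
rewrite /binz -!/(ffactz _ _) ffactzSS divzDl ?dvdz_fact_ffactz //.
rewrite -{1}(divzK (dvdz_fact_ffactz n k)) mulrCA -PoszM -factS mulzK //.
by rewrite eqz_nat -lt0n fact_gt0.
Qed.

Section LeftBrace.
Variables (A : zmodType) (mul : A -> A -> A).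
Hypothesis hA : is_left_brace mul.
Local Notation "x ⋆ y" := (bstar mul x y) (at level 40, left associativity).

Definition lambda a b := mul a b - a.

Lemma lambdaD a b c : lambda a (b + c) = lambda a b + lambda a c.
Proof. by case: hA => _ _ mulD; rewrite /lambda mulD addrA. Qed.

Lemma lambda0 a : lambda a 0 = 0.
Proof. by apply: (addrI (lambda a 0)); rewrite -lambdaD !addr0. Qed.

Lemma lambdaN a b : lambda a (- b) = - lambda a b.
Proof. by apply/eqP; rewrite -addr_eq0 -lambdaD addNr lambda0. Qed.

Lemma brace_neutral_zero :
  (forall x, mul 0 x = x /\ mul x 0 = x) /\
  (forall x, exists y, mul x y = 0 /\ mul y x = 0).
Proof.
case: hA => _ [e [eK eV]] _.
suff e0 : e = 0 by subst e.
by apply: oppr_inj; rewrite oppr0 -(lambda0 e) /lambda (eK 0).1 sub0r.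
Qed.

Lemma lambdaM a b c : lambda (mul a b) c = lambda a (lambda b c).
Proof.
case: hA => mulA _ _.
by rewrite {3}/lambda lambdaD lambdaN /lambda mulA opprB addrA subrK.
Qed.

Lemma lambda0l x : lambda 0 x = x.
Proof. by rewrite /lambda (brace_neutral_zero.1 x).1 subr0. Qed.

Lemma lambda_inj a : injective (lambda a).
Proof.
have [b [_ ba0]] := brace_neutral_zero.2 a.
by move=> x y E; rewrite -(lambda0l x) -(lambda0l y) -ba0 !lambdaM E.
Qed.

Lemma lambda_surj a y : exists x, lambda a x = y.
Proof.
have [b [ab0 _]] := brace_neutral_zero.2 a.
by exists (lambda b y); rewrite -lambdaM ab0 lambda0l.
Qed.

Lemma mulE x y : mul x y = x + lambda x y.
Proof. by rewrite /lambda addrC subrK. Qed.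

Lemma bstarE a b : a ⋆ b = lambda a b - b.
Proof. by rewrite /bstar /lambda [- a + _]addrC. Qed.

Lemma lambdaE a b : lambda a b = b + a ⋆ b.
Proof. by rewrite bstarE addrC subrK. Qed.

Lemma bstarD a b c : a ⋆ (b + c) = a ⋆ b + a ⋆ c.
Proof. by rewrite !bstarE lambdaD opprD addrACA. Qed.

Lemma bstar0 a : a ⋆ 0 = 0.
Proof. by rewrite bstarE lambda0 subr0. Qed.

Lemma bstar0l b : 0 ⋆ b = 0.
Proof. by rewrite bstarE lambda0l subrr. Qed.

Lemma bstarMz a x z : a ⋆ (x *~ z) = (a ⋆ x) *~ z.
Proof.
move: z; apply: int_ind_shift; first by rewrite !mulr0z bstar0.
by move=> n; rewrite !mulrzDr !mulr1z bstarD; split => [->|/addIr].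
Qed.

Lemma bstar_mul a b c : mul a b ⋆ c = a ⋆ (b ⋆ c) + a ⋆ c + b ⋆ c.
Proof.
rewrite bstarE lambdaM [lambda b c]lambdaE lambdaD !lambdaE.
by rewrite addrC addrA addKr [RHS]addrAC [a ⋆ (b ⋆ c) + b ⋆ c]addrC addrC.
Qed.

Lemma right_series2_bstar x y : right_series mul 2 (x ⋆ y).
Proof. by apply: addgen_in; exists x, y. Qed.

Hypothesis hA3 : forall x, right_series mul 3 x -> x = 0.

Lemma bstar_right_series2 w c : right_series mul 2 w -> w ⋆ c = 0.
Proof. by move=> Aw; apply: hA3; apply: addgen_in; exists w, c. Qed.

Lemma bstarDr_right_series2 z w c : right_series mul 2 w -> (z + w) ⋆ c = z ⋆ c.
Proof.
move=> Aw; have [u zu] := lambda_surj z w.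
have Au : right_series mul 2 u.
  have -> : u = w - z ⋆ u by rewrite -zu lambdaE addrK.
  exact: addgen_sub Aw (right_series2_bstar z u).
by rewrite -zu -mulE bstar_mul (bstar_right_series2 c Au) bstar0 add0r addr0.
Qed.

(* With y = lambda_x(y'), the sum x + y is the brace product x y'. *)
Lemma bstarDl x y c : (x + y) ⋆ c = x ⋆ c + y ⋆ c + x ⋆ (y ⋆ c).
Proof.
have [y' xy'] := lambda_surj x y.
have -> : y ⋆ c = y' ⋆ c.
  by rewrite -xy' lambdaE (bstarDr_right_series2 _ _ (right_series2_bstar _ _)).
by rewrite -xy' -mulE bstar_mul [x ⋆ (y' ⋆ c) + _]addrC addrAC.
Qed.

Lemma bstarMzS a b n : (a *~ (n + 1)) ⋆ b = a ⋆ b + lambda a ((a *~ n) ⋆ b).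
Proof. by rewrite mulrzDr mulr1z addrC bstarDl lambdaE -addrA. Qed.

End LeftBrace.

Section Aseq.
Variables (A : zmodType) (mul : A -> A -> A) (a : A).
Local Notation "x ⋆ y" := (bstar mul x y) (at level 40, left associativity).
Local Notation aseq := (aseq mul a).

Lemma aseqS k : (1 <= k)%N -> aseq k.+1 = a ⋆ aseq k.
Proof. by case: k. Qed.

Lemma aseq_left_series k : left_series mul k.+1 (aseq k.+1).
Proof. by elim: k => [//|k IHk]; apply: addgen_in; exists a, (aseq k.+1). Qed.

Hypothesis hA : is_left_brace mul.
Variables (m j : nat).
Hypothesis hAm : forall x, left_series mul m.+1 x -> x = 0.
Hypothesis j_le_m : (j <= m)%N.

Definition binomial_sum (n : int) : A :=
  \sum_(k < m - j) aseq (k.+1 + j) *~ binz n k.+1.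

Lemma binomial_sum0 : binomial_sum 0 = 0.
Proof. by rewrite /binomial_sum big1 // => k _; rewrite binz0n mulr0z. Qed.

Lemma binomial_sumS n :
  binomial_sum (n + 1) = aseq j.+1 + lambda mul a (binomial_sum n).
Proof.
have -> : binomial_sum (n + 1) =
    binomial_sum n + \sum_(k < m - j) aseq (k.+1 + j) *~ binz n k.
  by rewrite -big_split; apply: eq_bigr => k _; rewrite binzS mulrzDr.
rewrite lambdaE addrCA; congr (_ + _).
rewrite (big_morph (bstar mul a) (bstarD hA a) (bstar0 hA a)).
under [in RHS]eq_bigr => k _ do rewrite bstarMz // -aseqS ?addn_gt0 //.
have aseq_m1 : aseq m.+1 = 0 := hAm (aseq_left_series m).
rewrite -(subnK j_le_m) in aseq_m1.
case: (m - j)%N aseq_m1 => [|M] aseq_M1.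
  by move: aseq_M1; rewrite add0n !big_ord0 addr0 => ->.
rewrite big_ord_recl big_ord_recr /= binz0 mulr1z add1n.
by rewrite aseq_M1 mul0rz addr0.
Qed.

End Aseq.

Theorem mainTheorem11 (A : zmodType) (mul : A -> A -> A) (m : nat)
  (hm : (2 <= m)%N) (hA : is_left_brace mul)
  (h3 : forall x, right_series mul 3 x -> x = 0)
  (hm1 : forall x, left_series mul m.+1 x -> x = 0)
  (a : A) (n : int) (j : nat) (hj1 : (1 <= j)%N) (hjm : (j <= m)%N) :
  bstar mul (a *~ n) (aseq mul a j)
  = \sum_(1 <= k < (m - j).+1) (aseq mul a (k + j)) *~ binz n k.
Proof.
rewrite big_add1 big_mkord -/(binomial_sum mul a m j n).
move: n; apply: (eq_int_recurrence (lambda_inj (a := a) hA)) => [|n|n].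
- by rewrite mulr0z bstar0l // binomial_sum0.
- exact: (bstarMzS hA h3).
- by rewrite -aseqS // (binomial_sumS _ hA hm1 hjm).
Qed.
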